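(* Let $\mathsf G$ be a group having a non-trivial outer automorphism class $[\varphi]\in\mathsf{Out}(\mathsf G)$ such that (1) $[\varphi]^2=[id_{\mathsf G}]$ in $\mathsf{Out}(\mathsf G)$, and (2) for every automorphism $\phi\in[\varphi]$ and every $g\in\mathsf G$ with $\phi^2=c_g$, one has $\phi(g)\neq g$. Then $\mathbb{S}ym(\mathsf G)$ is not split (i.e. $\mathsf G$ is not permutationally split).
   Context: $c_g$ denotes the inner automorphism $h\mapsto ghg^{-1}$; $\mathsf{Out}(\mathsf G)=\mathsf{Aut}(\mathsf G)/\mathsf{Inn}(\mathsf G)$. $\mathsf G$ is regarded as a one-object groupoid, and $\mathbb{S}ym(\mathsf G)$ is the 2-group of self-equivalences of this groupoid and natural isomorphisms, with tensor product composition (equivalently: objects the automorphisms $\phi$ of $\mathsf G$, morphisms $\phi\to\tilde\phi$ the elements $g$ with $\tilde\phi=c_g\circ\phi$). A 2-group is split if it is equivalent (monoidal functor with pseudo-inverse up to monoidal natural isomorphism) to an elementary 2-group $\mathsf A[1]\rtimes\mathsf H[0]$ for some group $\mathsf H$ and left $\mathsf H$-module $\mathsf A$: the strict 2-group with objects the elements of $\mathsf H$, morphisms $(a,h):h\to h$, composition $(a',h)\circ(a,h)=(a'+a,h)$, tensor $h\otimes h'=hh'$, $(a,h)\otimes(a',h')=(a+h\lhd a',hh')$. $\mathsf G$ is permutationally split if $\mathbb{S}ym(\mathsf G)$ is split. *)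

From Stdlib Require Import Utf8 Setoid.
Set Implicit Arguments.
Unset Strict Implicit.

Record group := Group {
  gcar :> Type;
  gmul : gcar -> gcar -> gcar;
  gone : gcar;
  ginv : gcar -> gcar;
  gmulA : forall x y z, gmul x (gmul y z) = gmul (gmul x y) z;
  gmul1l : forall x, gmul gone x = x;
  gmulVl : forall x, gmul (ginv x) x = gone
}.
Arguments gmul {g}. Arguments gone {g}. Arguments ginv {g}.

Section GroupFacts.
Variable G : group.
Lemma gmulVr (x : G) : gmul x (ginv x) = gone.
Proof.
  rewrite <- (gmul1l (gmul x (ginv x))).
  rewrite <- (gmulVl (ginv x)) at 1.
  rewrite <- gmulA, (gmulA (ginv x)), gmulVl, gmul1l. apply gmulVl.
Qed.
Lemma gmul1r (x : G) : gmul x gone = x.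
Proof. rewrite <- (gmulVl x), gmulA, gmulVr. apply gmul1l. Qed.
End GroupFacts.

Definition conj (G : group) (g x : G) : G := gmul (gmul g x) (ginv g).

Definition is_aut (G : group) (f : G -> G) : Prop :=
  (forall x y, f (gmul x y) = gmul (f x) (f y)) /\
  exists f' : G -> G, (forall x, f' (f x) = x) /\ (forall x, f (f' x) = x).

Lemma conj_mul (G : group) (g x y : G) :
  conj g (gmul x y) = gmul (conj g x) (conj g y).
Proof.
  unfold conj. rewrite !gmulA.
  rewrite <- (gmulA (gmul g x) (ginv g) g), gmulVl, gmul1r. reflexivity.
Qed.

Lemma conj_inv (G : group) (g x : G) : conj (ginv g) (conj g x) = x.
Proof.
  unfold conj. rewrite !gmulA, gmulVl, gmul1l.
  rewrite <- (gmulA x (ginv g) (ginv (ginv g))), gmulVr. apply gmul1r.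
Qed.

Lemma inv_inv (G : group) (g : G) : ginv (ginv g) = g.
Proof.
  rewrite <- (gmul1r (ginv (ginv g))), <- (gmulVl g), gmulA, gmulVl. apply gmul1l.
Qed.

Lemma comp_aut (G : group) (f h : G -> G) :
  is_aut f -> is_aut h -> is_aut (fun x => f (h x)).
Proof.
  intros [Hf [f' [Hf1 Hf2]]] [Hh [h' [Hh1 Hh2]]]. split.
  - intros x y. rewrite Hh. apply Hf.
  - exists (fun x => h' (f' x)). split; intros x.
    + rewrite Hf1. apply Hh1.
    + rewrite Hh2. apply Hf2.
Qed.

Lemma conj_aut (G : group) (g : G) : is_aut (conj g).
Proof.
  split. apply conj_mul. exists (conj (ginv g)). split; intros x.
  apply conj_inv. rewrite <- (inv_inv g) at 1. apply conj_inv.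
Qed.

Lemma id_aut (G : group) : is_aut (fun x : G => x).
Proof. split. reflexivity. exists (fun x => x). split; reflexivity. Qed.

Record hmod (H : group) := HMod {
  mcar :> Type;
  madd : mcar -> mcar -> mcar;
  mzero : mcar;
  mopp : mcar -> mcar;
  maddA : forall a b c, madd a (madd b c) = madd (madd a b) c;
  maddC : forall a b, madd a b = madd b a;
  madd0l : forall a, madd mzero a = a;
  maddNl : forall a, madd (mopp a) a = mzero;
  mact : H -> mcar -> mcar;
  mact1 : forall a, mact gone a = a;
  mactM : forall h k a, mact (gmul h k) a = mact h (mact k a);
  mactD : forall h a b, mact h (madd a b) = madd (mact h a) (mact h b)
}.
Arguments madd {H} {_}. Arguments mzero {H} {_}. Arguments mact {H} {_}.

(** * Strict 2-groups, presented with a "flat" type of morphisms: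
    every element m of Mor is a morphism src m -> tgt m;
    cmp m n is the composite m o n (meaningful when src m = tgt n);
    tno / tnm are the tensor product on objects / morphisms; unit is the
    tensor unit.  Associativity and unit laws hold strictly (as Leibniz
    equalities) in the two instances below. *)
Record s2data := S2 {
  Ob : Type;
  Mor : Type;
  src : Mor -> Ob;
  tgt : Mor -> Ob;
  idm : Ob -> Mor;
  cmp : Mor -> Mor -> Mor;
  tno : Ob -> Ob -> Ob;
  tnm : Mor -> Mor -> Mor;
  unit : Ob
}.
Arguments src {s}. Arguments tgt {s}. Arguments idm {s}. Arguments cmp {s}.
Arguments tno {s}. Arguments tnm {s}. Arguments unit s : clear implicits.

(** The 2-group Sym(G): objects the automorphisms phi of G, a morphism
    (g, phi) : phi -> c_g o phi; composition (g, c_h o phi) o (h, phi) =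
    (g h, phi); tensor = composition of automorphisms,
    (g,phi) (x) (h,psi) = (g phi(h), phi o psi). *)
Definition AutG (G : group) := { f : G -> G | is_aut f }.

Definition aut_comp (G : group) (f h : AutG G) : AutG G :=
  exist _ (fun x => proj1_sig f (proj1_sig h x))
        (comp_aut (proj2_sig f) (proj2_sig h)).

Definition aut_conj (G : group) (g : G) : AutG G := exist _ (conj g) (conj_aut g).

Definition aut_id (G : group) : AutG G := exist _ (fun x => x) (id_aut G).

Definition Sym (G : group) : s2data := {|
  Ob := AutG G;
  Mor := (G * AutG G)%type;
  src := fun m => snd m;
  tgt := fun m => aut_comp (aut_conj (fst m)) (snd m);
  idm := fun f => (gone, f);
  cmp := fun m n => (gmul (fst m) (fst n), snd n);
  tno := @aut_comp G;
  tnm := fun m n => (gmul (fst m) (proj1_sig (snd m) (fst n)),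
                     aut_comp (snd m) (snd n));
  unit := aut_id G
|}.

Definition Elem (H : group) (A : hmod H) : s2data := {|
  Ob := gcar H;
  Mor := (A * H)%type;
  src := fun m => snd m;
  tgt := fun m => snd m;
  idm := fun h => (mzero, h);
  cmp := fun m n => (madd (fst m) (fst n), snd n);
  tno := @gmul H;
  tnm := fun m n => (madd (fst m) (mact (snd m) (fst n)), gmul (snd m) (snd n));
  unit := @gone H
|}.

Record mfdata (C D : s2data) := MF {
  F0 : Ob C -> Ob D;
  F1 : Mor C -> Mor D;
  fmu : Ob C -> Ob C -> Mor D;   (* F x (x) F y -> F (x (x) y) *)
  feps : Mor D                   (* I -> F I *)
}.
Arguments F0 {C D}. Arguments F1 {C D}. Arguments fmu {C D}. Arguments feps {C D}.

Definition is_monfun (C D : s2data) (F : mfdata C D) : Prop :=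
  (forall f, src (F1 F f) = F0 F (src f) /\ tgt (F1 F f) = F0 F (tgt f)) /\
  (forall x, F1 F (idm x) = idm (F0 F x)) /\
  (forall f g, src f = tgt g -> F1 F (cmp f g) = cmp (F1 F f) (F1 F g)) /\
  (forall x y, src (fmu F x y) = tno (F0 F x) (F0 F y) /\
               tgt (fmu F x y) = F0 F (tno x y)) /\
  (src (feps F) = unit D /\ tgt (feps F) = F0 F (unit C)) /\
  (forall f g, cmp (fmu F (tgt f) (tgt g)) (tnm (F1 F f) (F1 F g)) =
               cmp (F1 F (tnm f g)) (fmu F (src f) (src g))) /\
  (forall x y z,
      cmp (fmu F (tno x y) z) (tnm (fmu F x y) (idm (F0 F z))) =
      cmp (fmu F x (tno y z)) (tnm (idm (F0 F x)) (fmu F y z))) /\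
  (forall x, cmp (fmu F (unit C) x) (tnm (feps F) (idm (F0 F x))) = idm (F0 F x)) /\
  (forall x, cmp (fmu F x (unit C)) (tnm (idm (F0 F x)) (feps F)) = idm (F0 F x)).

(** Monoidal natural transformation theta : F => F'.  All morphisms of a
    2-group are invertible, so these are monoidal natural isomorphisms. *)
Definition is_monnat (C D : s2data) (F F' : mfdata C D) (theta : Ob C -> Mor D) : Prop :=
  (forall x, src (theta x) = F0 F x /\ tgt (theta x) = F0 F' x) /\
  (forall f, cmp (theta (tgt f)) (F1 F f) = cmp (F1 F' f) (theta (src f))) /\
  (forall x y, cmp (theta (tno x y)) (fmu F x y) =
               cmp (fmu F' x y) (tnm (theta x) (theta y))) /\
  cmp (theta (unit C)) (feps F) = feps F'.

Definition mf_comp (C D E : s2data) (F : mfdata C D) (G : mfdata D E) : mfdata C E :=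
  {| F0 := fun x => F0 G (F0 F x);
     F1 := fun f => F1 G (F1 F f);
     fmu := fun x y => cmp (F1 G (fmu F x y)) (fmu G (F0 F x) (F0 F y));
     feps := cmp (F1 G (feps F)) (feps G) |}.

Definition mf_id (C : s2data) : mfdata C C :=
  {| F0 := fun x => x; F1 := fun f => f;
     fmu := fun x y => idm (tno x y); feps := idm (unit C) |}.

Definition mon_equivalent (C D : s2data) : Prop :=
  exists (F : mfdata C D) (G : mfdata D C) (eta : Ob C -> Mor C) (eps : Ob D -> Mor D),
    is_monfun F /\ is_monfun G /\
    is_monnat (mf_comp F G) (mf_id C) eta /\
    is_monnat (mf_comp G F) (mf_id D) eps.

Definition split2 (C : s2data) : Prop :=
  exists (H : group) (A : hmod H), mon_equivalent C (Elem A).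

Definition permutationally_split (G : group) : Prop := split2 (Sym G).

(** Suppose F : Sym(G) -> A[1] ⋊ H[0] is a monoidal equivalence with
    pseudo-inverse F'.  Morphisms of an elementary 2-group are endomorphisms
    and its tensor product is the group law of H, so the object map of any
    monoidal functor into it is constant along morphisms and multiplicative;
    since phi o phi is isomorphic to id in Sym(G), h := F(phi) satisfies
    h h = 1.  Conversely, for any involution h of H, the coherence data of
    the monoidal functor F' produce an element g with psi o psi = c_g and
    psi(g) = g, where psi := F'(h).  Finally the unit eta : F'F => id
    exhibits psi as a representative of [phi], contradicting hypothesis (2). *)

From Stdlib Require Import ProofIrrelevance FunctionalExtensionality.
Set Implicit Arguments.

Section GroupAlgebra.
Variable G : group.

Lemma gmul_cancel_l (x y z : G) : gmul x y = gmul x z -> y = z.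
Proof.
  intro E.
  rewrite <- (gmul1l y), <- (gmul1l z), <- (gmulVl x), <- !gmulA, E.
  reflexivity.
Qed.

Lemma ginv_unique (x y : G) : gmul y x = gone -> y = ginv x.
Proof.
  intro E. rewrite <- (gmul1r y), <- (gmulVr x), gmulA, E. apply gmul1l.
Qed.

Lemma ginv_mul (x y : G) : ginv (gmul x y) = gmul (ginv y) (ginv x).
Proof.
  symmetry. apply ginv_unique.
  rewrite <- gmulA, (gmulA (ginv x)), gmulVl, gmul1l. apply gmulVl.
Qed.

Lemma aut_one (f : G -> G) : is_aut f -> f gone = gone.
Proof.
  intros [Hmul _]. apply (gmul_cancel_l (f gone)).
  rewrite <- Hmul, gmul1l, gmul1r. reflexivity.
Qed.

Lemma aut_inv (f : G -> G) (x : G) : is_aut f -> f (ginv x) = ginv (f x).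
Proof.
  intros Hf. apply ginv_unique.
  rewrite <- (proj1 Hf), gmulVl. apply aut_one, Hf.
Qed.

Lemma conj_mulg (x y z : G) : conj (gmul x y) z = conj x (conj y z).
Proof. unfold conj. rewrite ginv_mul, !gmulA. reflexivity. Qed.

Lemma autG_eq (f h : AutG G) :
  (forall x, proj1_sig f x = proj1_sig h x) -> f = h.
Proof.
  destruct f as [f pf], h as [h ph]; simpl; intros E.
  assert (f = h) by (apply functional_extensionality; exact E).
  subst. f_equal. apply proof_irrelevance.
Qed.

Lemma Sym_mor_class (m : Mor (Sym G)) (x : G) :
  proj1_sig (src m) x = conj (ginv (fst m)) (proj1_sig (tgt m) x).
Proof. simpl. symmetry. apply conj_inv. Qed.

End GroupAlgebra.

Section FunctorsIntoElementary.
Variables (C : s2data) (H : group) (A : hmod H) (F : mfdata C (Elem A)).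
Hypothesis HF : is_monfun F.

(** All morphisms of A[1] ⋊ H[0] are endomorphisms, so F identifies the
    source and target of every morphism. *)
Lemma elem_functor_mor (f : Mor C) : F0 F (src f) = F0 F (tgt f).
Proof.
  destruct (proj1 HF f) as [Es Et]. simpl in Es, Et. rewrite <- Es, <- Et.
  reflexivity.
Qed.

(** The structure morphisms of F force F to be strictly monoidal on objects. *)
Lemma elem_functor_unit : F0 F (unit C) = gone.
Proof.
  destruct HF as [_ [_ [_ [_ [[Es Et] _]]]]]. simpl in Es, Et.
  rewrite <- Et, <- Es. reflexivity.
Qed.

Lemma elem_functor_tensor (x y : Ob C) :
  F0 F (tno x y) = gmul (F0 F x) (F0 F y).
Proof.
  destruct HF as [_ [_ [_ [Hmu _]]]]. destruct (Hmu x y) as [Es Et].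
  simpl in Es, Et. rewrite <- Et, <- Es. reflexivity.
Qed.

End FunctorsIntoElementary.

Lemma elem_image_involution (G H : group) (A : hmod H)
    (F : mfdata (Sym G) (Elem A)) (HF : is_monfun F) (Phi : AutG G) (g0 : G)
    (Hsq : forall x, proj1_sig Phi (proj1_sig Phi x) = conj g0 x) :
  gmul (F0 F Phi) (F0 F Phi) = gone.
Proof.
  (* (g0, id) : id -> c_g0 = Phi o Phi is a morphism of Sym(G). *)
  assert (Etgt : tgt ((g0, aut_id G) : Mor (Sym G)) = tno (s := Sym G) Phi Phi).
  { apply autG_eq. intro x. simpl. symmetry. apply Hsq. }
  rewrite <- (elem_functor_tensor HF Phi Phi), <- Etgt, <- (elem_functor_mor HF).
  apply (elem_functor_unit HF).
Qed.

Section FunctorsIntoSym.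
Variables (G H : group) (A : hmod H) (F' : mfdata (Elem A) (Sym G)).
Hypothesis HF' : is_monfun F'.
Variable h : H.
Hypothesis Hinvol : gmul h h = gone.

(** psi is the automorphism F'(h); its multiplication constraint
    a : psi o psi -> F'(hh) = F'(1) and unit constraint e : id -> F'(1)
    combine into the element (a^-1 e). *)
Let psi : G -> G := proj1_sig (F0 F' h).
Let a : G := fst (fmu F' h h).
Let e : G := fst (feps F').

(** The constraints give c_a o psi o psi = F'(1) = c_e. *)
Lemma image_involution_square (x : G) :
  psi (psi x) = conj (gmul (ginv a) e) x.
Proof.
  destruct HF' as [_ [_ [_ [Hmu [[Ees Eet] _]]]]].
  destruct (Hmu h h) as [Ems Emt]. simpl in Ems, Emt, Ees, Eet.
  rewrite Hinvol, Ems, <- Eet, Ees in Emt.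
  pose proof (f_equal (fun f => proj1_sig f x) Emt) as Ex. simpl in Ex.
  unfold psi. rewrite conj_mulg. fold a e in Ex. rewrite <- Ex.
  symmetry. apply conj_inv.
Qed.

(** The unit and associativity coherences at h evaluated on the group
    components give e^-1 a = psi(e)^-1 psi(a), i.e. psi fixes a^-1 e. *)
Lemma image_involution_fixed : psi (gmul (ginv a) e) = gmul (ginv a) e.
Proof.
  destruct HF' as [_ [_ [_ [_ [_ [_ [Hassoc [Hlunit Hrunit]]]]]]]].
  pose proof (f_equal fst (Hlunit h)) as Lu. simpl in Lu.
  pose proof (f_equal fst (Hrunit h)) as Ru. simpl in Ru.
  pose proof (f_equal fst (Hassoc h h h)) as As. simpl in As.
  rewrite Hinvol in As. fold psi a e in Lu, Ru, As.
  rewrite (aut_one (proj2_sig (snd (feps F')))), gmul1r in Lu.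
  rewrite gmul1l in Ru.
  rewrite (aut_one (proj2_sig (snd (fmu F' h h)))), gmul1r, gmul1l in As.
  apply ginv_unique in Lu. apply ginv_unique in Ru. rewrite Lu, Ru in As.
  assert (Hpsi : is_aut psi) by exact (proj2_sig (F0 F' h)).
  rewrite <- (aut_inv _ Hpsi), <- (proj1 Hpsi) in As.
  replace (gmul (ginv a) e) with (ginv (gmul (ginv e) a))
    by (rewrite ginv_mul, inv_inv; reflexivity).
  rewrite (aut_inv _ Hpsi), <- As. reflexivity.
Qed.

End FunctorsIntoSym.

Theorem corollary4p23 (G : group) (phi : G -> G) (Hphi : is_aut phi)
  (Hnontriv : ~ exists g : G, forall x, phi x = conj g x)
  (Hsq : exists g : G, forall x, phi (phi x) = conj g x)
  (Hfix : forall psi : G -> G, is_aut psi ->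
            (exists h : G, forall x, psi x = conj h (phi x)) ->
            forall g : G, (forall x, psi (psi x) = conj g x) -> psi g <> g) :
  ~ permutationally_split G.
Proof.
  intros [H [A [F [F' [eta [_ [HF [HF' [Heta _]]]]]]]]].
  destruct Hsq as [g0 Hg0].
  set (Phi := exist _ phi Hphi : AutG G).
  set (h := F0 F Phi).
  assert (Hinvol : gmul h h = gone) by exact (elem_image_involution HF Phi g0 Hg0).
  set (Psi := F0 F' h).
  (* eta at Phi is a morphism F'(F(Phi)) = Psi -> Phi, so Psi lies in [phi]. *)
  assert (Hclass : exists k, forall x, proj1_sig Psi x = conj k (phi x)).
  { destruct (proj1 Heta Phi) as [Es Et]. exists (ginv (fst (eta Phi))).
    intro x. pose proof (Sym_mor_class (eta Phi) x) as Ex.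
    rewrite Es, Et in Ex. exact Ex. }
  apply (Hfix (proj1_sig Psi) (proj2_sig Psi) Hclass _
           (image_involution_square HF' h Hinvol)).
  exact (image_involution_fixed HF' h Hinvol).
Qed.
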